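(* Let $Q$ be a quiver and let $C\subseteq \Bbbk Q$ be a monomial subcoalgebra. If $C$ is left f-qcF, then $C$ is left qcF.
   Context: $\Bbbk$ is a field. The path coalgebra $\Bbbk Q$ of a quiver $Q$ has as basis all paths of $Q$ (including the trivial paths, identified with the vertices), with $\Delta(p)=\sum_{xy=p}x\otimes y$ (where $xy$ is the concatenation of $x$ followed by $y$) and $\varepsilon(p)=1$ if $p$ is trivial, $0$ otherwise. A subcoalgebra $C\subseteq \Bbbk Q$ is monomial if it contains all vertices and arrows of $Q$ and has a linear basis consisting of paths. For a coalgebra $C$, the dual algebra $C^*$ has product $(fg)(x)=\sum f(x_1)g(x_2)$; a right $C$-comodule $M$ (coaction $m\mapsto\sum m_0\otimes m_1$) is a left $C^*$-module via $f\rightharpoonup m=\sum m_0f(m_1)$; in particular $C$ is a left $C^*$-module via $f\rightharpoonup x=\sum x_1 f(x_2)$. $C$ is left quasi-coFrobenius (left qcF) if $C$ embeds, as a left $C^*$-module, in a free left $C^*$-module. $C$ is left f-qcF if every finite dimensional right $C$-comodule embeds, as a left $C^*$-module, in a free left $C^*$-module. *)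

From HB Require Import structures.
From mathcomp Require Import all_boot all_order all_algebra.
From mathcomp Require Import boolp classical_sets cardinality fsbigop.
Set Implicit Arguments. Unset Strict Implicit. Unset Printing Implicit Defensive.
Import GRing.Theory.
Local Open Scope ring_scope.
Local Open Scope classical_set_scope.

Section PathCoalgebra.
Variables (k : fieldType) (V A : choiceType) (s t : A -> V).
(* A quiver Q: vertices V, arrows A, arrow a goes from s a to t a. *)

(* Raw candidates for paths: a starting vertex and a list of arrows. *)
Definition raw := (V * seq A)%type.

(* (v, [::]) is the trivial path at v; (v, [:: a1; ..; an]) is a path iff
   s a1 = v and t a_i = s a_(i+1). *)
Definition is_path (p : raw) : bool :=
  match p.2 with
  | [::] => true
  | a :: l => (s a == p.1) && path (fun a b => t a == s b) a l
  end.

Definition tgt (p : raw) : V :=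
  match p.2 with [::] => p.1 | a :: l => t (last a l) end.

Definition vtx (v : V) : raw := (v, [::]).
Definition arr (a : A) : raw := (s a, [:: a]).

Definition concat (x y : raw) : raw := (x.1, x.2 ++ y.2).
Definition composable (x y : raw) : bool :=
  [&& is_path x, is_path y & tgt x == y.1].

(* Elements of kQ (resp. X (x) kQ) are represented by their coefficient
   functions on the basis of paths.  Coefficient of x (x) y in Delta(c),
   where Delta(p) = sum_{xy = p} x (x) y. *)
Definition Delta (X : zmodType) (c : raw -> X) (x y : raw) : X :=
  if composable x y then c (concat x y) else 0.

Definition eps (p : raw) : k := (p.2 == [::])%:R.

Definition fin_supp (T : Type) (X : zmodType) (g : T -> X) : Prop :=
  finite_set [set x | g x != 0].

Definition kQ_elt (c : raw -> k) : Prop :=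
  fin_supp c /\ (forall p, c p != 0 -> is_path p).

Definition in_span (S : pred raw) (c : raw -> k) : Prop :=
  kQ_elt c /\ (forall p, c p != 0 -> S p).

(* C = span S is a monomial subcoalgebra of kQ: S consists of paths,
   contains all vertices and arrows, and Delta(C) is contained in
   C (x) C = span (S x S). *)
Definition monomial (S : pred raw) : Prop :=
  [/\ {subset S <= is_path},
      (forall v, S (vtx v)),
      (forall a, S (arr a)) &
      (forall c, in_span S c ->
         forall x y, Delta c x y != 0 -> S x && S y)].

Section Dual.
Variable S : pred raw.

(* C^* = Hom(C, k), identified with functions on the basis S of C. *)
Definition Sp := {p : raw | S p}.
Definition ev (f : Sp -> k) (r : raw) : k :=
  match (insub r : option Sp) with Some q => f q | None => 0 end.

Definition pre (i : nat) (p : raw) : raw := (p.1, take i p.2).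
Definition suf (i : nat) (p : raw) : raw := (tgt (pre i p), drop i p.2).

(* product of C^*: (fg)(p) = sum_{xy = p} f(x) g(y) *)
Definition dmul (f g : Sp -> k) : Sp -> k := fun q =>
  \sum_(i < (size (val q).2).+1)
     ev f (pre i (val q)) * ev g (suf i (val q)).

(* Right C-comodule structure rho : M -> M (x) C, where an element of
   M (x) C is written sum_p (rho m p) (x) p, p ranging over S. *)
Record right_comodule (M : lmodType k) (rho : M -> raw -> M) : Prop := {
  rho_linear : forall (a : k) (m n : M) p,
      rho (a *: m + n) p = a *: rho m p + rho n p;
  rho_fin : forall m, fin_supp (rho m);
  rho_supp : forall m p, rho m p != 0 -> S p;
  rho_coassoc : forall m x y, rho (rho m y) x = Delta (rho m) x y;
  rho_counit : forall m, \sum_(p \in [set: raw]) (eps p *: rho m p) = m }.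

(* left C^*-action on a right comodule: f -> m = sum m_0 f(m_1) *)
Definition cact (M : lmodType k) (rho : M -> raw -> M) (f : Sp -> k) (m : M)
  : M := \sum_(p \in [set: raw]) (ev f p *: rho m p).

(* M (with left C^*-action act) embeds, as a left C^*-module, into a free
   left C^*-module (C^* )-sum over I = direct sum of copies of C^*. *)
Definition embeds_in_free (M : lmodType k) (act : (Sp -> k) -> M -> M)
  : Prop :=
  exists (I : Type) (phi : M -> I -> Sp -> k),
    [/\ (forall m, finite_set [set i | exists q, phi m i q != 0]),
        (forall m n i q, phi (m + n) i q = phi m i q + phi n i q),
        (forall f m i q, phi (act f m) i q = dmul f (phi m i) q) &
        (forall m n, (forall i q, phi m i q = phi n i q) -> m = n)].

(* C as a left C^*-module: (f -> c) = sum c_1 f(c_2), i.e.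
   (f -> c)(x) = sum_y f(y) c(xy). *)
Definition hitC (f : Sp -> k) (c : raw -> k) : raw -> k := fun x =>
  \sum_(y \in [set: raw]) (ev f y * Delta c x y).

Definition left_qcF : Prop :=
  exists (I : Type) (phi : (raw -> k) -> I -> Sp -> k),
    [/\ (forall c, in_span S c -> finite_set [set i | exists q, phi c i q != 0]),
        (forall c d, in_span S c -> in_span S d ->
           forall i q, phi (fun p => c p + d p) i q = phi c i q + phi d i q),
        (forall f c, in_span S c ->
           forall i q, phi (hitC f c) i q = dmul f (phi c i) q) &
        (forall c d, in_span S c -> in_span S d ->
           (forall i q, phi c i q = phi d i q) -> forall p, c p = d p)].

Definition left_fqcF : Prop :=
  forall (M : vectType k) (rho : M -> raw -> M),
    right_comodule rho -> embeds_in_free (cact rho).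

End Dual.
End PathCoalgebra.

From mathcomp Require Import all_boot all_order all_algebra.
From mathcomp Require Import boolp classical_sets cardinality fsbigop.
From mathcomp Require Import finmap.
Set Implicit Arguments. Unset Strict Implicit. Unset Printing Implicit Defensive.

(* Let v be a vertex and embed the finite-dimensional subcomodule spanned by
   some paths of C from v, closed under prefixes, in a free C^*-module. The
   vertex e_v has a nonzero coordinate at some path q. Since the dual basis
   element of a path p from v sends p to e_v, every such p is a prefix of q;
   since the dual basis element of an arrow a ending at v kills e_v, the path
   a q is not in C. Hence the paths of C from v form a chain for the prefix
   order, and this chain is finite: otherwise it would be an infinite path
   a1 a2 ... whose tail after a1 has the nonextendable path at t(a1) as a
   prefix q, putting a1 q in C. So C is the direct sum, over the vertices v,
   of the finite-dimensional subcomodules spanned by the prefixes of the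
   longest path from v, and these embed in free modules by hypothesis. *)

Section QuiverPaths.
Variables (V A : choiceType) (s t : A -> V).
Local Notation raw := (raw V A).
Local Notation is_path := (is_path s t).
Local Notation composable := (composable s t).
Local Notation tgt := (tgt t).
Local Notation suf := (suf t).

Lemma is_path_concat (x y : raw) : tgt x = y.1 ->
  is_path (concat x y) = is_path x && is_path y.
Proof.
case: x y => u [|a l1] [w l2] /= e; rewrite /concat /is_path /=; first by subst w.
rewrite cat_path; case: l2 e => [|b l2] e /=; first by rewrite !andbT.
by rewrite /tgt /= in e; rewrite e (eq_sym w) !andbA.
Qed.

Lemma tgt_concat (x y : raw) : tgt x = y.1 -> tgt (concat x y) = tgt y.
Proof.
case: x y => u [|a l1] [w l2] /= e; rewrite /concat /tgt /=; first by case: l2.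
by case: l2 => [|b l2]; rewrite ?cats0 //= last_cat.
Qed.

Lemma concatA (x y z : raw) : concat (concat x y) z = concat x (concat y z).
Proof. by rewrite /concat /= catA. Qed.

Lemma concat_pre_suf i (p : raw) : concat (pre i p) (suf i p) = p.
Proof. by case: p => u l; rewrite /concat /pre /suf /= cat_take_drop. Qed.

Lemma is_path_pre i (p : raw) : is_path p -> is_path (pre i p).
Proof. by rewrite -{1}(concat_pre_suf i p) is_path_concat // => /andP[]. Qed.

Lemma is_path_suf i (p : raw) : is_path p -> is_path (suf i p).
Proof. by rewrite -{1}(concat_pre_suf i p) is_path_concat // => /andP[]. Qed.

Lemma pre_concat (x y : raw) : pre (size x.2) (concat x y) = x.
Proof. by case: x => u l; rewrite /pre /concat /= take_size_cat. Qed.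

Lemma suf_concat (x y : raw) : tgt x = y.1 -> suf (size x.2) (concat x y) = y.
Proof.
by case: y => w l2 /= e; rewrite /suf pre_concat e /concat /= drop_size_cat.
Qed.

Lemma pre_pre i j (p : raw) : i <= j -> pre i (pre j p) = pre i p.
Proof. by move=> ij; rewrite /pre /= take_takel. Qed.

Lemma pre_size (p : raw) : pre (size p.2) p = p.
Proof. by case: p => u l; rewrite /pre /= take_size. Qed.

Lemma size_pre i (p : raw) : i <= size p.2 -> size (pre i p).2 = i.
Proof. by move=> h; rewrite /pre /= size_takel. Qed.

Lemma pre_size_eq j (q p : raw) : pre j q = p -> pre (size p.2) q = p.
Proof.
move=> <-; rewrite /pre /=; congr pair.
by rewrite -{2}(cat_take_drop j q.2) take_size_cat.
Qed.

Lemma composable_pre_suf i (p : raw) :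
  is_path p -> composable (pre i p) (suf i p).
Proof. by move=> h; rewrite /composable is_path_pre // is_path_suf //= eqxx. Qed.

Lemma composable_concatA (x y z : raw) :
  composable x y && composable (concat x y) z =
  composable y z && composable x (concat y z).
Proof.
rewrite /composable /=.
have [exy|] := eqVneq (tgt x) y.1; last by rewrite !andbF /= ?andbF.
rewrite is_path_concat // tgt_concat //.
have [eyz|] := eqVneq (tgt y) z.1; last by rewrite !andbF.
rewrite is_path_concat // ?eqxx ?andbT.
by case: (is_path x); case: (is_path y); case: (is_path z).
Qed.

Lemma concat_eq_vtxl (x p : raw) : is_path x -> is_path p ->
  composable x p && (concat x p == p) = (x == vtx A p.1).
Proof.
case: x => u [|b l] ipx ipp.
  rewrite /composable ipx ipp /concat /vtx /= /tgt /=.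
  have [->|ne] := eqVneq u p.1; first by rewrite -surjective_pairing !eqxx.
  by rewrite xpair_eqE (negbTE ne).
rewrite [RHS](_ : _ = false); last by rewrite /vtx xpair_eqE /= andbF.
apply/negbTE/negP => /andP[_ /eqP/(congr1 (fun r => size r.2))].
by rewrite /concat /= size_cat => /eqP; rewrite eqn_leq ltnNge leq_addl.
Qed.

Definition prefixes (p : raw) : seq raw :=
  [seq pre i p | i <- iota 0 (size p.2).+1].

Definition prefix_closed (P : seq raw) := forall r i, r \in P -> pre i r \in P.

Lemma mem_prefixes n (p : raw) : pre n p \in prefixes p.
Proof.
apply/mapP; exists (minn n (size p.2)); first by rewrite mem_iota ltnS geq_minr.
by rewrite /pre take_min take_size.
Qed.

Lemma prefixes_id (p : raw) : p \in prefixes p.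
Proof. by rewrite -{1}(pre_size p) mem_prefixes. Qed.

Lemma prefixesP (r p : raw) : r \in prefixes p -> exists n, r = pre n p.
Proof. by case/mapP => n _ ->; exists n. Qed.

Lemma prefixes_src (r p : raw) : r \in prefixes p -> r.1 = p.1.
Proof. by case/prefixesP => n ->. Qed.

Lemma prefixes_closed (p : raw) : prefix_closed (prefixes p).
Proof.
move=> _ i /prefixesP [n ->]; have [le_in|lt_ni] := leqP i n.
  by rewrite pre_pre // mem_prefixes.
by rewrite /pre /= take_taker ?(ltnW lt_ni) // mem_prefixes.
Qed.

Lemma prefix_closed_cat (P1 P2 : seq raw) :
  prefix_closed P1 -> prefix_closed P2 -> prefix_closed (P1 ++ P2).
Proof.
by move=> cl1 cl2 r i; rewrite !mem_cat => /orP[/cl1|/cl2] ->; rewrite ?orbT.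
Qed.

End QuiverPaths.

Import GRing.Theory.
Local Open Scope ring_scope.
Local Open Scope classical_set_scope.

Lemma fsbig_single (T : choiceType) (X : nmodType) (F : T -> X) x0 :
  (forall x, x != x0 -> F x = 0) -> \sum_(x \in [set: T]) F x = F x0.
Proof.
move=> F0; rewrite -(fsbig_widen [set x0]) ?fsbig_set1 // => x [_ /eqP].
exact: F0.
Qed.

Lemma fsbig_ffunE (T : choiceType) (I : finType) (X : zmodType)
    (F : T -> {ffun I -> X}) i :
  fin_supp F -> (\sum_(x \in [set: T]) F x) i = \sum_(x \in [set: T]) F x i.
Proof.
move=> finF; pose D := fset_set [set x | F x != 0].
have FD x : x \notin D -> F x = 0.
  rewrite in_fset_set // notin_setE /= => /negP.
  by rewrite negbK => /eqP.
by rewrite (fsbigTE D) // (fsbigTE D) ?sum_ffunE // => x /FD ->; rewrite ffunE.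
Qed.

Lemma sumr_neq0_exists (I : finType) (X : nmodType) (F : I -> X) :
  \sum_i F i != 0 -> exists i, F i != 0.
Proof.
apply: contraNP => noF; apply/eqP/big1 => i _.
by apply/eqP; apply: contra_notP noF => /negP ?; exists i.
Qed.

Section Monomial.
Variables (k : fieldType) (V A : choiceType) (s t : A -> V) (S : pred (raw V A)).
Hypothesis monS : monomial k s t S.
Local Notation raw := (raw V A).

Lemma S_is_path p : S p -> is_path s t p.
Proof. by case: monS => + _ _ _; apply. Qed.

Lemma S_vtx v : S (vtx A v).
Proof. by case: monS. Qed.

Lemma S_arr a : S (arr s a).
Proof. by case: monS. Qed.

Lemma in_span_path p : S p -> in_span s t S (fun r => (r == p)%:R : k).
Proof.
move=> Sp; have supp r : (r == p)%:R != 0 :> k -> r = p.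
  by case: (r =P p) => // _; rewrite eqxx.
split; [split|] => [|r /supp ->|r /supp ->] //; last exact: S_is_path.
by apply: (sub_finite_set _ (finite_set1 p)) => r /= /supp.
Qed.

Lemma S_concat (x y : raw) :
  composable s t x y -> S (concat x y) -> S x /\ S y.
Proof.
move=> cxy Sxy; case: monS => _ _ _ /(_ _ (in_span_path Sxy) x y).
by rewrite /Delta cxy /= eqxx oner_neq0 => /(_ isT) /andP.
Qed.

Lemma S_pre i p : S p -> S (pre i p).
Proof.
move=> Sp; apply: (proj1 (S_concat (composable_pre_suf i (S_is_path Sp)) _)).
by rewrite concat_pre_suf.
Qed.

Lemma S_suf i p : S p -> S (suf t i p).
Proof.
move=> Sp; apply: (proj2 (S_concat (composable_pre_suf i (S_is_path Sp)) _)).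
by rewrite concat_pre_suf.
Qed.

Lemma S_prefixes p : S p -> {subset prefixes p <= S}.
Proof. by move=> Sp r /prefixesP [n ->]; apply: S_pre. Qed.

End Monomial.

Section PathComodule.
Variables (k : fieldType) (V A : choiceType) (s t : A -> V) (S : pred (raw V A)).
Variable P : seq (raw V A).
Local Notation raw := (raw V A).
Local Notation composable := (composable s t).

(* The subcomodule of C spanned by the paths in P, in coordinates. *)
Definition CP := {ffun seq_sub P -> k^o}.

Definition CP_coef (m : CP) (r : raw) : k :=
  if insub r is Some x then m x else 0.

Definition CP_coact (m : CP) (p : raw) : CP :=
  [ffun x => Delta s t (CP_coef m) (val x) p].

Definition CP_basis (p : raw) : CP := [ffun x => (val x == p)%:R].

Definition CP_restr (c : raw -> k) : CP := [ffun x => c (val x)].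

Lemma CP_coef_val m (x : seq_sub P) : CP_coef m (val x) = m x.
Proof. by rewrite /CP_coef valK. Qed.

Lemma CP_coef_out m r : r \notin P -> CP_coef m r = 0.
Proof. by move=> rP; rewrite /CP_coef insubN. Qed.

Lemma CP_coef_restr c r : r \in P -> CP_coef (CP_restr c) r = c r.
Proof. by move=> rP; rewrite /CP_coef insubT ffunE. Qed.

Lemma CP_coef_basis p r : p \in P -> CP_coef (CP_basis p) r = (r == p)%:R.
Proof.
move=> pP; have [rP|rP] := boolP (r \in P).
  by rewrite /CP_coef insubT ffunE.
by rewrite CP_coef_out //; case: eqP rP => // ->; rewrite pP.
Qed.

Lemma CP_coefD a (m n : CP) r :
  CP_coef (a *: m + n) r = a * CP_coef m r + CP_coef n r.
Proof.
by rewrite /CP_coef; case: insub => [x|]; rewrite ?ffunE ?mulr0 ?addr0.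
Qed.

Lemma CP_coact_supp m p : CP_coact m p != 0 ->
  exists2 x : seq_sub P, composable (val x) p & concat (val x) p \in P.
Proof.
apply: contraNP => nox; apply/eqP/ffunP => x; rewrite !ffunE /Delta.
case: ifP => // cxp; rewrite CP_coef_out //.
by apply: contra_notN nox => xpP; exists x.
Qed.

Lemma CP_coact_fin m : fin_supp (CP_coact m).
Proof.
pose sufs := [seq suf t i r | r <- P, i <- iota 0 (size r.2).+1].
apply: (sub_finite_set _ (finite_seq sufs)) => p /= /CP_coact_supp [x cxp xpP].
apply/allpairsPdep; exists (concat (val x) p), (size (val x).2); split => //.
  by rewrite mem_iota /= size_cat ltnS leq_addr.
by rewrite suf_concat //; case/and3P: cxp => _ _ /eqP.
Qed.

Lemma cact_CP (f : Sp S -> k) m :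
  cact CP_coact f m = [ffun x => hitC s t f (CP_coef m) (val x)].
Proof.
apply/ffunP => x; rewrite ffunE /cact fsbig_ffunE; last first.
  apply: (sub_finite_set _ (CP_coact_fin m)) => p /=.
  by apply: contra => /eqP ->; rewrite scaler0.
by apply: eq_fsbigr => p _; rewrite !ffunE.
Qed.

Hypothesis monS : monomial k s t S.
Hypothesis P_sub_S : {subset P <= S}.
Hypothesis P_closed : prefix_closed P.

Lemma CP_coef_coact m y r : CP_coef (CP_coact m y) r = Delta s t (CP_coef m) r y.
Proof.
have [rP|rP] := boolP (r \in P); first by rewrite /CP_coef insubT /= ffunE.
rewrite CP_coef_out // /Delta; case: ifP => // _.
rewrite CP_coef_out //; apply: contra rP => /(P_closed (size r.2)).
by rewrite pre_concat.
Qed.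

Lemma CP_coact_coassoc m x y :
  CP_coact (CP_coact m y) x = Delta s t (CP_coact m) x y.
Proof.
apply/ffunP => z; have := composable_concatA s t (val z) x y.
rewrite /Delta; case cxy: (composable x y);
  rewrite !ffunE /Delta CP_coef_coact /Delta.
  case: (composable (val z) x); case: (composable (concat _ x) y);
    case: (composable (val z) (concat x y)) => //= _.
  by rewrite concatA.
by case: (composable (val z) x) => //= ->.
Qed.

Lemma CP_counit m : \sum_(p \in [set: raw]) (eps k p *: CP_coact m p) = m.
Proof.
apply/ffunP => z; rewrite fsbig_ffunE; last first.
  apply: (sub_finite_set _ (CP_coact_fin m)) => p /=.
  by apply: contra => /eqP ->; rewrite scaler0.
have zS : is_path s t (val z) by apply/(S_is_path monS)/P_sub_S/valP.
rewrite (fsbig_single (x0 := vtx A (tgt t (val z)))).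
  rewrite !ffunE /eps /Delta /composable /= zS eqxx /concat /= cats0 scale1r.
  by rewrite -surjective_pairing CP_coef_val.
move=> p zp; rewrite !ffunE /eps /Delta.
have [p0|] := eqVneq p.2 [::]; last by rewrite scale0r.
case: ifP => [/and3P[_ _ /eqP zp1]|]; last by rewrite scaler0.
by case/eqP: zp; rewrite /vtx zp1 -p0 -surjective_pairing.
Qed.

Lemma CP_comodule : right_comodule s t S CP_coact.
Proof.
split=> [a m n p|||m p|];
  [|exact: CP_coact_fin| |exact: CP_coact_coassoc|exact: CP_counit].
  apply/ffunP => x; rewrite !ffunE /Delta.
  by case: (composable _ _); rewrite ?CP_coefD // ?scaler0 ?addr0.
move=> m p /CP_coact_supp [x cxp /P_sub_S xpS].
exact: (proj2 (S_concat monS cxp xpS)).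
Qed.

End PathComodule.

Section DualPaths.
Variables (k : fieldType) (V A : choiceType) (s t : A -> V) (S : pred (raw V A)).
Local Notation raw := (raw V A).

Definition dual_path (p : raw) : Sp S -> k := fun q => (val q == p)%:R.

Lemma ev_val (g : Sp S -> k) (q : Sp S) : ev g (val q) = g q.
Proof. by rewrite /ev valK. Qed.

Lemma ev_dual_path_neq0 p r : ev (dual_path p) r != 0 -> r = p.
Proof.
rewrite /ev /dual_path; case: insubP => [q _ <-|]; last by rewrite eqxx.
by case: (val q =P p) => // _; rewrite eqxx.
Qed.

Lemma ev_dual_path_id p : S p -> ev (dual_path p) p = 1.
Proof. by move=> Sp; rewrite /ev /dual_path insubT /= eqxx. Qed.

Lemma hitC_dual_path p (c : raw -> k) x : S p ->
  hitC s t (dual_path p) c x = Delta s t c x p.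
Proof.
move=> Sp; rewrite /hitC (fsbig_single (x0 := p)) ?ev_dual_path_id ?mul1r //.
move=> y yp; have /eqP-> : ev (dual_path p) y == 0.
  by apply: contraNT yp => /ev_dual_path_neq0 ->.
by rewrite mul0r.
Qed.

Lemma dmul_dual_path_neq0 p (g : Sp S -> k) q :
  dmul t (dual_path p) g q != 0 -> pre (size p.2) (val q) = p.
Proof.
case/sumr_neq0_exists => j.
have [->|/ev_dual_path_neq0 qp _] := eqVneq (ev (dual_path p) (pre j (val q))) 0.
  by rewrite mul0r eqxx.
exact: pre_size_eq qp.
Qed.

Hypothesis monS : monomial k s t S.

(* Only the splitting [a | q] of [a q] survives in the product. *)
Lemma dmul_dual_arr a (g : Sp S -> k) (q : Sp S)
    (aqS : S (concat (arr s a) (val q))) :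
  t a = (val q).1 ->
  dmul t (dual_path (arr s a)) g (exist (fun r => S r) _ aqS) = g q.
Proof.
move=> ta; rewrite /dmul /= !big_ord_recl big1 => [|j _]; last first.
  set pj := pre _ _.
  have [->|/ev_dual_path_neq0 e] := eqVneq (ev (dual_path (arr s a)) pj) 0.
    by rewrite mul0r.
  move: (congr1 (fun r => size r.2) e).
  by rewrite /pj /= size_takel // /bump leq0n add0n add1n.
have -> : ev (dual_path (arr s a)) (pre 0 (concat (arr s a) (val q))) = 0.
  apply/eqP; apply: contraT => /ev_dual_path_neq0 e.
  by move: (congr1 (fun r => size r.2) e).
have arr_pre : pre (lift ord0 ord0) (concat (arr s a) (val q)) = arr s a.
  by rewrite /pre /= take0.
rewrite arr_pre ev_dual_path_id ?(S_arr monS) // /suf arr_pre /tgt /= drop0 ta.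
by rewrite -surjective_pairing ev_val mul0r mul1r add0r addr0.
Qed.

End DualPaths.

Section EmbeddedComodule.
Variables (k : fieldType) (V A : choiceType) (s t : A -> V) (S : pred (raw V A)).
Hypothesis monS : monomial k s t S.
Variable P : seq (raw V A).
Hypothesis P_sub_S : {subset P <= S}.
Local Notation raw := (raw V A).
Local Notation CP := (CP k P).
Local Notation act := (cact (S:=S) (CP_coact s t (P:=P))).
Local Notation basis := (CP_basis k P).

Lemma act_dual_path_basis (p : raw) : p \in P ->
  act (dual_path k p) (basis p) = basis (vtx A p.1).
Proof.
move=> pP; have Sp : S p by exact: P_sub_S.
rewrite cact_CP; apply/ffunP => x; rewrite !ffunE hitC_dual_path // /Delta.
have := concat_eq_vtxl (S_is_path monS (P_sub_S (valP x))) (S_is_path monS Sp).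
by case: (composable _ _ _ _) => /= <-; rewrite ?CP_coef_basis.
Qed.

Lemma act_dual_arr_vtx a v : vtx A v \in P ->
  act (dual_path k (arr s a)) (basis (vtx A v)) = 0.
Proof.
move=> vP; rewrite cact_CP; apply/ffunP => x.
rewrite !ffunE hitC_dual_path ?(S_arr monS) // /Delta; case: ifP => // _.
rewrite CP_coef_basis // /concat /vtx xpair_eqE /=.
by case: (val x).2 => [|? ?]; rewrite andbF.
Qed.

Variables (I : Type) (phi : CP -> I -> Sp S -> k).
Hypothesis phiD : forall m n i q, phi (m + n) i q = phi m i q + phi n i q.
Hypothesis phi_act : forall f m i q, phi (act f m) i q = dmul t f (phi m i) q.
Hypothesis phi_inj : forall m n, (forall i q, phi m i q = phi n i q) -> m = n.

Lemma phi0 i q : phi 0 i q = 0.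
Proof. by apply: (@addrI _ (phi 0 i q)); rewrite -phiD !addr0. Qed.

Lemma phi_basis_neq0 (p : raw) : p \in P -> exists i q, phi (basis p) i q != 0.
Proof.
move=> pP; apply: contrapT => phi_p0.
have : basis p = 0.
  apply: phi_inj => i q; rewrite phi0; apply/eqP.
  by apply: contra_notP phi_p0 => /negP ?; exists i, q.
move/ffunP/(_ (SeqSub pP)); rewrite !ffunE /= eqxx => /eqP.
by rewrite oner_eq0.
Qed.

Lemma phi_basis_vtx_prefix (p : raw) i q : p \in P ->
  phi (basis (vtx A p.1)) i q != 0 -> pre (size p.2) (val q) = p.
Proof.
by move=> pP; rewrite -act_dual_path_basis // phi_act => /dmul_dual_path_neq0.
Qed.

Lemma phi_basis_vtx_nonext v i q a : vtx A v \in P ->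
  phi (basis (vtx A v)) i q != 0 -> t a = (val q).1 ->
  ~ S (concat (arr s a) (val q)).
Proof.
move=> vP phi_v ta aqS; move: phi_v.
rewrite -(dmul_dual_arr monS _ aqS ta) -phi_act act_dual_arr_vtx //.
by rewrite phi0 eqxx.
Qed.

End EmbeddedComodule.

Section PathsFromAVertex.
Variables (k : fieldType) (V A : choiceType) (s t : A -> V) (S : pred (raw V A)).
Hypothesis monS : monomial k s t S.
Hypothesis fqcF : left_fqcF k s t S.
Local Notation raw := (raw V A).

Lemma exists_common_extension (P : seq raw) v : {subset P <= S} -> prefix_closed P ->
  vtx A v \in P ->
  exists q, [/\ S q, forall p, p \in P -> p.1 = v -> pre (size p.2) q = p
            & forall a, t a = v -> ~ S (concat (arr s a) q)].
Proof.
move=> P_sub_S P_closed vP.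
have [I [phi [_ phiD phi_act phi_inj]]] :=
  fqcF (CP_comodule monS P_sub_S P_closed).
have [i [q phi_v]] := phi_basis_neq0 phiD phi_inj vP.
have pre_q (p : raw) : p \in P -> p.1 = v -> pre (size p.2) (val q) = p.
  move=> pP pv; apply: (phi_basis_vtx_prefix monS P_sub_S phi_act (i := i) pP).
  by rewrite pv.
have q_src : (val q).1 = v := congr1 fst (pre_q _ vP erefl).
exists (val q); split => // [|a ta]; first exact: valP.
by apply: (phi_basis_vtx_nonext monS phiD phi_act vP phi_v); rewrite ta q_src.
Qed.

Lemma S_prefix_comparable p1 p2 : S p1 -> S p2 -> p1.1 = p2.1 ->
  pre (size p1.2) p2 = p1 \/ pre (size p2.2) p1 = p2.
Proof.
move=> S1 S2 e12.
have P_sub_S : {subset prefixes p1 ++ prefixes p2 <= S}.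
  by move=> r; rewrite mem_cat => /orP[];
    [apply: (S_prefixes monS S1)|apply: (S_prefixes monS S2)].
have P_closed :=
  prefix_closed_cat (prefixes_closed (p := p1)) (prefixes_closed (p := p2)).
have vP : vtx A p1.1 \in prefixes p1 ++ prefixes p2.
  by rewrite mem_cat (_ : vtx A _ = pre 0 p1) ?mem_prefixes // /pre take0.
have [q [_ pre_q _]] := exists_common_extension P_sub_S P_closed vP.
have q1 : pre (size p1.2) q = p1.
  by apply: pre_q; rewrite ?mem_cat ?prefixes_id.
have q2 : pre (size p2.2) q = p2.
  by apply: pre_q; rewrite ?mem_cat ?prefixes_id ?orbT.
have [le12|lt21] := leqP (size p1.2) (size p2.2).
  by left; rewrite -q2 pre_pre.
by right; rewrite -q1 pre_pre // ltnW.
Qed.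

Lemma exists_nonextendable v : exists q, [/\ S q, q.1 = v &
  forall a, t a = v -> ~ S (concat (arr s a) q)].
Proof.
have P_sub_S : {subset [:: vtx A v] <= S}.
  by move=> r; rewrite mem_seq1 => /eqP ->; apply: (S_vtx monS).
have P_closed : prefix_closed [:: vtx A v].
  by move=> r i; rewrite mem_seq1 => /eqP ->; rewrite /pre /= mem_seq1; case: i.
have [q [Sq pre_q nonext]] := exists_common_extension P_sub_S P_closed (mem_head _ _).
by exists q; split => //; apply: (congr1 fst (pre_q _ (mem_head _ _) erefl)).
Qed.

Definition longest_from v (m : raw) : Prop :=
  [/\ S m, m.1 = v & forall p, S p -> p.1 = v -> pre (size p.2) m = p].

Lemma paths_of_all_lengths v : ~ (exists m, longest_from v m) ->
  forall n, exists u, [/\ S u, u.1 = v & size u.2 = n].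
Proof.
move=> no_longest; elim=> [|n [u [Su uv un]]].
  by exists (vtx A v); split => //; apply: (S_vtx monS).
have /existsNP [p /not_implyP [Sp /not_implyP [pv pu]]] :
    ~ (forall p, S p -> p.1 = v -> pre (size p.2) u = p).
  by move=> u_longest; apply: no_longest; exists u.
have [up|] := S_prefix_comparable Su Sp (etrans uv (esym pv)); last by [].
have lt_np : (n < size p.2)%N.
  rewrite ltnNge; apply/negP => le_pn; apply: pu.
  have -> : u = p by rewrite -up /pre take_oversize ?un // -surjective_pairing.
  exact: pre_size.
exists (pre n.+1 p); split; [exact: (S_pre monS) | exact: pv | exact: size_pre].
Qed.

Lemma exists_longest_from v : exists m, longest_from v m.
Proof.
apply: contrapT => no_longest; have len := paths_of_all_lengths no_longest.
have [[w [|a1 [|? ?]]] [S1 /= w_v len1]] := len 1 => //.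
have sa1 : s a1 = v.
  by move: (S_is_path monS S1); rewrite /is_path /= andbT => /eqP ->.
have [q [Sq q_src nonext]] := exists_nonextendable (t a1).
have [u [Su u_src len_u]] := len (size q.2).+1.
have pre1u : pre 1 u = (w, [:: a1]).
  have [//|u1] := S_prefix_comparable S1 Su (etrans w_v (esym u_src)).
  by rewrite -u1 pre_pre ?len_u // pre_size.
have Sr : S (suf t 1 u) by exact: (S_suf monS).
have rq : suf t 1 u = q.
  have r_src : (suf t 1 u).1 = q.1 by rewrite q_src /suf pre1u.
  have r_size : size (suf t 1 u).2 = size q.2 by rewrite size_drop len_u subn1.
  have [rq|qr] := S_prefix_comparable Sr Sq r_src.
    by rewrite -rq r_size pre_size.
  by rewrite -qr -r_size pre_size.
apply: (nonext a1 erefl); rewrite -rq (_ : arr s a1 = pre 1 u).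
  by rewrite concat_pre_suf.
by rewrite pre1u /arr sa1 w_v.
Qed.

End PathsFromAVertex.

Section SourceDecomposition.
Variables (k : fieldType) (V A : choiceType) (s t : A -> V) (S : pred (raw V A)).
Variable P : V -> seq (raw V A).
Hypothesis P_src : forall v r, r \in P v -> r.1 = v.
Hypothesis P_cover : forall p, S p -> p \in P p.1.
Local Notation raw := (raw V A).
Local Notation restr v := (CP_restr (k:=k) (P v)).
Local Notation act v := (cact (S:=S) (CP_coact (k:=k) s t (P:=P v))).

Definition free_embedding (M : lmodType k) (act : (Sp S -> k) -> M -> M)
    (I : Type) (phi : M -> I -> Sp S -> k) : Prop :=
  [/\ forall m, finite_set [set i | exists q, phi m i q != 0],
      forall m n i q, phi (m + n) i q = phi m i q + phi n i q,
      forall f m i q, phi (act f m) i q = dmul t f (phi m i) q &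
      forall m n, (forall i q, phi m i q = phi n i q) -> m = n].

Lemma free_embedding_family :
  (forall v, embeds_in_free t (act v)) ->
  exists (I : V -> Type) (phi : forall v, CP k (P v) -> I v -> Sp S -> k),
    forall v, free_embedding (act v) (phi v).
Proof.
move=> emb; exists (fun v => sval (cid (emb v))).
exists (fun v => sval (cid (svalP (cid (emb v))))).
by move=> v; exact: svalP (cid (svalP (cid (emb v)))).
Qed.

Lemma CP_restrD v (c d : raw -> k) :
  restr v (fun p => c p + d p) = restr v c + restr v d.
Proof. by apply/ffunP => x; rewrite !ffunE. Qed.

Lemma CP_restr_eq0 v (c : raw -> k) :
  (forall p, c p != 0 -> p.1 != v) -> restr v c = 0.
Proof.
move=> c_src; apply/ffunP => x; rewrite !ffunE; apply/eqP.
by apply: contraT => /c_src; rewrite (P_src (valP x)) eqxx.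
Qed.

Lemma CP_restr_hitC v f (c : raw -> k) : in_span s t S c ->
  restr v (hitC s t f c) = act v f (restr v c).
Proof.
move=> [_ cS]; rewrite cact_CP; apply/ffunP => x; rewrite !ffunE /hitC.
apply: eq_fsbigr => y _; congr (_ * _); rewrite /Delta; case: ifP => // _.
have [xyP|xyP] := boolP (concat (val x) y \in P v).
  by rewrite CP_coef_restr.
rewrite CP_coef_out //; apply/eqP; apply: contraNT xyP => /cS /P_cover.
by rewrite /= (P_src (valP x)).
Qed.

Variables (I : V -> Type) (phi : forall v, CP k (P v) -> I v -> Sp S -> k).
Hypothesis phi_emb : forall v, free_embedding (act v) (@phi v).

Let Phi (c : raw -> k) (j : {v : V & I v}) : Sp S -> k :=
  @phi (projT1 j) (restr (projT1 j) c) (projT2 j).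

Lemma Phi_fin c : in_span s t S c ->
  finite_set [set j | exists q, Phi c j q != 0].
Proof.
move=> [[fin_c _] _]; pose src := fst @` [set p | c p != 0].
apply: (sub_finite_set (B := \bigcup_(v in src)
    existT I v @` [set i | exists q, @phi v (restr v c) i q != 0])).
  move=> [v i] /= [q Phi_q]; exists v; last by exists i => //; exists q.
  apply: contrapT => v_src; move: Phi_q; rewrite /Phi /= CP_restr_eq0.
    by case: (phi_emb v) => _ phiD _ _; rewrite (phi0 phiD) eqxx.
  by move=> p c_p; apply/eqP => p_v; apply: v_src; exists p.
apply: bigcup_finite; first exact: finite_image.
by move=> v _; apply: finite_image; case: (phi_emb v).
Qed.

Lemma left_qcF_of_decomposition : left_qcF k s t S.
Proof.
exists {v : V & I v}, Phi; split.
- exact: Phi_fin.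
- move=> c d _ _ [v i] q; rewrite /Phi /= CP_restrD.
  by case: (phi_emb v) => _ phiD _ _; apply: phiD.
- move=> f c c_span [v i] q; rewrite /Phi /= CP_restr_hitC //.
  by case: (phi_emb v) => _ _ phi_act _; apply: phi_act.
- move=> c d [_ cS] [_ dS] Phi_cd p.
  have [Sp|nSp] := boolP (S p); last first.
    by rewrite (contraNeq (@cS p) nSp) (contraNeq (@dS p) nSp).
  have : restr p.1 c = restr p.1 d.
    case: (phi_emb p.1) => _ _ _; apply=> i q.
    exact: (Phi_cd (existT I p.1 i) q).
  by move/ffunP/(_ (SeqSub (P_cover Sp))); rewrite !ffunE.
Qed.

End SourceDecomposition.

Theorem theorem4p8 (k : fieldType) (V A : choiceType) (s t : A -> V)
    (S : pred (raw V A)) :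
  monomial k s t S -> left_fqcF k s t S -> left_qcF k s t S.
Proof.
move=> monS fqcF.
have /choice [m m_longest] := exists_longest_from monS fqcF.
pose P v := prefixes (m v).
have P_sub_S v : {subset P v <= S}.
  by case: (m_longest v) => Sm _ _; exact: (S_prefixes monS Sm).
have P_src v r : r \in P v -> r.1 = v.
  by case: (m_longest v) => _ m_src _ /prefixes_src ->.
have P_cover p : S p -> p \in P p.1.
  move=> Sp; case: (m_longest p.1) => _ _ /(_ p Sp erefl) m_p.
  by rewrite -{1}m_p mem_prefixes.
have [I [phi phi_emb]] := free_embedding_family (fun v =>
  fqcF _ _ (CP_comodule monS (P_sub_S v) (prefixes_closed (p := m v)))).
exact: (left_qcF_of_decomposition (P := P) P_src P_cover phi_emb).
Qed.
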